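(* Let $N\ge 4$ be an integer. Suppose $w\in C^2([0,\infty))$ satisfies $$-w''(t)+(N-2)w'(t)+(N-1)w(t)=\frac{N-1}{2}\,e^{-t}\,w(t)^2\qquad\text{for all }t\ge 0,$$ together with $w(0)=0$ and $\lim_{t\to+\infty}w(t)=0$. Then $w\equiv 0$.
   Context: This is the radial Dirichlet problem (after the substitutions $v=u'$, $w(t)=-v(e^{-t})$) for $\Delta^2u=S_2[u]$ in the unit ball of $\mathbb{R}^N$, where $S_2[u]$ is the sum of the $2\times2$ principal minors of the Hessian matrix of $u$; this is the case $k=2$, $\lambda=0$. *)

From Stdlib Require Import Reals.
From Coquelicot Require Import Coquelicot.
Open Scope R_scope.

(* g is the derivative of f on [0, +oo) in the sense of functions on the
   closed half-line: for every t >= 0, the difference quotient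
   (f (t+h) - f t)/h tends to g t as h -> 0 with h <> 0 and t + h >= 0
   (one-sided derivative at t = 0, two-sided for t > 0). *)
Definition deriv_on_nonneg (f g : R -> R) : Prop :=
  forall t : R, 0 <= t ->
    filterlim (fun h => (f (t + h) - f t) / h)
      (within (fun h => h <> 0 /\ 0 <= t + h) (locally 0))
      (locally (g t)).

Definition continuous_on_nonneg (f : R -> R) : Prop :=
  forall t : R, 0 <= t ->
    filterlim f (within (fun s => 0 <= s) (locally t)) (locally (f t)).

Definition C2_nonneg (f f1 f2 : R -> R) : Prop :=
  deriv_on_nonneg f f1 /\ deriv_on_nonneg f1 f2 /\ continuous_on_nonneg f2.

(* With [z = exp (- t) * w] the equation becomes
   [z'' = (N - 4) z' + (2N - 4) z - (N - 1)/2 z^2], with [z -> 0] at both ends.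
   Since [N >= 4] the energy [E = z'^2/2 - F z], [F y = (N - 2) y^2 - (N - 1)/6 y^3],
   is nondecreasing. Letting [t -> 0+] gives [E >= 0]; if [E] were ever positive,
   [z'^2] would stay above a positive constant near infinity, against [z -> 0].
   Hence [z'^2 = 2 F z], so [u = z^2/(1 + z^2)] satisfies [u' <= lam u] with
   [u(0+) = 0], and Gronwall forces [u = 0]. *)

From Stdlib Require Import Reals Lra.
From Coquelicot Require Import Coquelicot.
Open Scope R_scope.

Lemma deriv_on_nonneg_is_derive (f g : R -> R) (t : R) :
  deriv_on_nonneg f g -> 0 < t -> is_derive f t (g t).
Proof.
  intros Hfg Ht. apply is_derive_Reals. intros eps Heps.
  destruct (Hfg t (Rlt_le _ _ Ht) _ (locally_ball (g t) (mkposreal eps Heps))) as [d Hd].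
  assert (Hm : 0 < Rmin d t) by (apply Rmin_pos; [apply cond_pos | lra]).
  exists (mkposreal _ Hm). intros h Hh0 Hh. simpl in Hh.
  pose proof (Rmin_l d t). pose proof (Rmin_r d t).
  apply Hd.
  - change (Rabs (h - 0) < d). rewrite Rminus_0_r. lra.
  - apply Rabs_def2 in Hh. split; [exact Hh0 | lra].
Qed.

Lemma deriv_on_nonneg_continuous (f g : R -> R) :
  deriv_on_nonneg f g -> continuous_on_nonneg f.
Proof.
  intros Hfg t Ht. apply filterlim_locally. intros eps.
  destruct (Hfg t Ht _ (locally_ball (g t) (mkposreal 1 Rlt_0_1))) as [d Hd].
  set (K := Rabs (g t) + 1).
  assert (HK : 0 < K) by (pose proof (Rabs_pos (g t)); unfold K; lra).
  assert (Hm : 0 < Rmin d (eps / K))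
    by (apply Rmin_pos; [apply cond_pos | apply Rdiv_lt_0_compat; [apply cond_pos | lra]]).
  exists (mkposreal _ Hm). intros s Hs Hs0. change R in s. simpl in Hs.
  change (Rabs (s - t) < Rmin d (eps / K)) in Hs.
  pose proof (Rmin_l d (eps / K)) as Hsd. pose proof (Rmin_r d (eps / K)) as Hse.
  change (Rabs (f s - f t) < eps).
  destruct (Req_dec s t) as [-> | Hst].
  { rewrite Rminus_diag, Rabs_R0. apply cond_pos. }
  set (h := s - t) in *.
  assert (Hq : Rabs ((f (t + h) - f t) / h - g t) < 1).
  { apply (Hd h); [change (Rabs (h - 0) < d); rewrite Rminus_0_r; lra
                  | unfold h; split; lra]. }
  replace (t + h) with s in Hq by (unfold h; ring).
  assert (Hqb : Rabs ((f s - f t) / h) < K).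
  { unfold K. pose proof (Rabs_triang ((f s - f t) / h - g t) (g t)).
    replace ((f s - f t) / h - g t + g t) with ((f s - f t) / h) in * by ring. lra. }
  replace (f s - f t) with (h * ((f s - f t) / h)) by (field; unfold h; lra).
  rewrite Rabs_mult.
  assert (Rabs h * K <= eps).
  { replace (pos eps) with (eps / K * K) by (field; lra).
    apply Rmult_le_compat_r; lra. }
  assert (0 < Rabs h) by (apply Rabs_pos_lt; unfold h; lra).
  apply (Rmult_lt_compat_l (Rabs h)) in Hqb; lra.
Qed.

Lemma deriv_on_nonneg_at_right0 (f g : R -> R) :
  deriv_on_nonneg f g -> filterlim f (at_right 0) (locally (f 0)).
Proof.
  intros Hfg.
  apply (filterlim_filter_le_1 (F := within (fun s => 0 <= s) (locally 0)) f).
  - intros P [d Hd]. exists d. intros y Hy Hy0. apply Hd; [exact Hy | lra].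
  - exact (deriv_on_nonneg_continuous f g Hfg 0 (Rle_refl 0)).
Qed.

Lemma filterlim_Rmult {T : Type} {F : (T -> Prop) -> Prop} {FF : Filter F}
    (f g : T -> R) (a b : R) :
  filterlim f F (locally a) -> filterlim g F (locally b) ->
  filterlim (fun x => f x * g x) F (locally (a * b)).
Proof.
  intros Hf Hg. eapply filterlim_comp_2; [exact Hf | exact Hg | apply (filterlim_mult a b)].
Qed.

Lemma ex_derive_at_right (f : R -> R) (a : R) :
  ex_derive f a -> filterlim f (at_right a) (locally (f a)).
Proof.
  intros Hf. apply (filterlim_filter_le_1 _ (filter_le_within (F := locally a) _)).
  exact (ex_derive_continuous (K := R_AbsRing) (V := R_NormedModule) f a Hf).
Qed.

Lemma filterlim_comp_ex_derive {T : Type} {F : (T -> Prop) -> Prop} {FF : Filter F}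
    (f : T -> R) (g : R -> R) (a : R) :
  filterlim f F (locally a) -> ex_derive g a -> filterlim (fun x => g (f x)) F (locally (g a)).
Proof.
  intros Hf Hg. apply (filterlim_comp _ _ _ f g F (locally a)); [exact Hf |].
  exact (ex_derive_continuous (K := R_AbsRing) (V := R_NormedModule) g a Hg).
Qed.

Lemma is_lim_exp_opp_pinfty : is_lim (fun s => exp (- s)) p_infty 0.
Proof.
  apply (is_lim_comp exp Ropp p_infty 0 m_infty is_lim_exp_m).
  - apply (is_lim_opp (fun s => s) p_infty p_infty), is_lim_id.
  - exists 0. intros y _. discriminate.
Qed.

Lemma is_derive_exp_opp_mult (f : R -> R) (s d : R) :
  is_derive f s d -> is_derive (fun x => exp (- x) * f x) s (exp (- s) * (d - f s)).
Proof.
  intros Hf. auto_derive.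
  - exists d. exact Hf.
  - replace (Derive (fun x => f x) s) with d by (symmetry; apply is_derive_unique, Hf). ring.
Qed.

Lemma at_right_lim_ge (g : R -> R) (a t c l : R) :
  filterlim g (at_right a) (locally l) -> a < t ->
  (forall r, a < r < t -> c <= g r) -> c <= l.
Proof.
  intros Hg Hat Hc.
  apply (filterlim_le (F := at_right a) (fun _ => c) g c l); [| apply filterlim_const | exact Hg].
  assert (Hd : 0 < t - a) by lra.
  exists (mkposreal _ Hd). intros r Hr Har. apply Hc. split; [exact Har|].
  change (Rabs (r - a) < t - a) in Hr. apply Rabs_def2 in Hr. lra.
Qed.

Lemma MVT_pos (f df : R -> R) (a b : R) : 0 < a -> a <= b ->
  (forall x, 0 < x -> is_derive f x (df x)) ->
  exists c, a <= c <= b /\ f b - f a = df c * (b - a).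
Proof.
  intros Ha Hab Hd.
  destruct (MVT_gen f a b df) as [c [Hc Heq]].
  - intros x Hx. apply Hd. rewrite Rmin_left in Hx by lra. lra.
  - intros x Hx. rewrite Rmin_left in Hx by lra.
    apply continuity_pt_filterlim, (ex_derive_continuous (K := R_AbsRing) (V := R_NormedModule)).
    exists (df x). apply Hd. lra.
  - rewrite Rmin_left, Rmax_right in Hc by lra. eauto.
Qed.

Lemma deriv_ge0_nondecreasing (f df : R -> R) (a b : R) : 0 < a -> a <= b ->
  (forall x, 0 < x -> is_derive f x (df x)) -> (forall x, 0 < x -> 0 <= df x) ->
  f a <= f b.
Proof.
  intros Ha Hab Hd Hpos. destruct (MVT_pos f df a b Ha Hab Hd) as [c [Hc Heq]].
  assert (0 <= df c * (b - a)) by (apply Rmult_le_pos; [apply Hpos | ]; lra).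
  lra.
Qed.

Lemma deriv_le0_nonincreasing (f df : R -> R) (a b : R) : 0 < a -> a <= b ->
  (forall x, 0 < x -> is_derive f x (df x)) -> (forall x, 0 < x -> df x <= 0) ->
  f b <= f a.
Proof.
  intros Ha Hab Hd Hneg. destruct (MVT_pos f df a b Ha Hab Hd) as [c [Hc Heq]].
  assert (df c <= 0) by (apply Hneg; lra).
  assert (0 <= - df c * (b - a)) by (apply Rmult_le_pos; lra).
  lra.
Qed.

Lemma is_lim_pinfty_deriv_sqr_lt (f df : R -> R) (l d a : R) : 0 < d -> 0 < a ->
  (forall x, 0 < x -> is_derive f x (df x)) -> is_lim f p_infty l ->
  exists c, a <= c /\ df c ^ 2 < d.
Proof.
  intros Hd Ha Hder Hlim.
  destruct (Hlim _ (locally_ball l (mkposreal 1 Rlt_0_1))) as [M HM].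
  pose proof (Rmax_l M a). pose proof (Rmax_r M a). set (T := Rmax M a) in *.
  set (L := 4 / d + 1).
  assert (HdL : d * L = 4 + d) by (unfold L; field; lra).
  assert (HL : 1 <= L) by (unfold L; assert (0 < 4 / d) by (apply Rdiv_lt_0_compat; lra); lra).
  destruct (MVT_pos f df (T + 1) (T + 1 + L)) as [c [Hc Heq]]; [lra | lra | exact Hder |].
  exists c. split; [lra|]. apply Rnot_le_lt. intros Hc2.
  pose proof (HM (T + 1) ltac:(lra)) as H1. pose proof (HM (T + 1 + L) ltac:(lra)) as H2.
  change (Rabs (f (T + 1) - l) < 1) in H1. change (Rabs (f (T + 1 + L) - l) < 1) in H2.
  apply Rabs_def2 in H1. apply Rabs_def2 in H2.
  replace (T + 1 + L - (T + 1)) with L in Heq by ring.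
  assert (Hsq : (df c * L) ^ 2 < 4).
  { rewrite <- Heq. set (D := f (T + 1 + L) - f (T + 1)).
    assert (- 2 < D < 2) by (unfold D; lra). nra. }
  assert (d * L <= df c ^ 2 * L ^ 2) by nra.
  nra.
Qed.

Lemma gronwall_at_right0 (u du : R -> R) (lam : R) :
  (forall s, 0 < s -> is_derive u s (du s)) -> (forall s, 0 < s -> du s <= lam * u s) ->
  filterlim u (at_right 0) (locally 0) -> forall t, 0 < t -> u t <= 0.
Proof.
  intros Hd Hdu Hu0 t Ht.
  set (phi := fun s => exp (- (lam * s)) * u s).
  set (dphi := fun s => exp (- (lam * s)) * (du s - lam * u s)).
  assert (Hphi : forall s, 0 < s -> is_derive phi s (dphi s)).
  { intros s Hs. unfold phi, dphi. auto_derive.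
    - exists (du s). exact (Hd s Hs).
    - replace (Derive (fun x => u x) s) with (du s) by (symmetry; apply is_derive_unique, Hd, Hs).
      ring. }
  assert (Hphi_le : forall r, 0 < r < t -> phi t <= phi r).
  { intros r Hr. apply (deriv_le0_nonincreasing phi dphi r t); [lra | lra | exact Hphi |].
    intros s Hs. unfold dphi. pose proof (exp_pos (- (lam * s))). pose proof (Hdu s Hs). nra. }
  assert (Hphi0 : filterlim phi (at_right 0) (locally 0)).
  { replace 0 with (exp (- (lam * 0)) * 0) at 2 by ring.
    unfold phi. apply (filterlim_Rmult (F := at_right 0)); [| exact Hu0].
    apply (ex_derive_at_right (fun s => exp (- (lam * s)))). auto_derive. trivial. }
  pose proof (at_right_lim_ge phi 0 t (phi t) 0 Hphi0 Ht Hphi_le).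
  unfold phi in *. pose proof (exp_pos (- (lam * t))). nra.
Qed.

Definition potential (n y : R) : R := (n - 2) * y ^ 2 - (n - 1) / 6 * y ^ 3.

Lemma potential0 (n : R) : potential n 0 = 0.
Proof. unfold potential. ring. Qed.

Lemma ex_derive_potential (n y : R) : ex_derive (potential n) y.
Proof. unfold potential. auto_derive. trivial. Qed.

(* [(2 y p)^2 = 4 y^4 (2n - 4 - (n - 1) y / 3)] and [|y| <= 1 + y^2 <= (1 + y^2)^2]. *)
Lemma zero_energy_mul_le (n y p : R) : 4 <= n -> p ^ 2 = 2 * potential n y ->
  2 * y * p <= 2 * ((2 * n - 4) + (n - 1) / 3) * y ^ 2 * (1 + y ^ 2).
Proof.
  unfold potential. intros Hn Hp.
  set (a := 2 * n - 4). set (b := (n - 1) / 3).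
  assert (Ha : 4 <= a) by (unfold a; lra). assert (Hb : 0 < b) by (unfold b; lra).
  set (X := (a + b) * (1 + y ^ 2)).
  assert (HX1 : 1 <= X) by (unfold X; pose proof (pow2_ge_0 y); nra).
  assert (HabX : a - b * y <= X ^ 2).
  { assert (a - b * y <= X) by (unfold X; assert (- y <= 1 + y ^ 2) by nra; nra). nra. }
  assert (Hsq : (2 * y * p) ^ 2 <= (2 * y ^ 2 * X) ^ 2).
  { replace ((2 * y * p) ^ 2) with (4 * (y ^ 2) ^ 2 * (a - b * y))
      by (replace ((2 * y * p) ^ 2) with (4 * y ^ 2 * p ^ 2) by ring;
          rewrite Hp; unfold a, b; field).
    replace ((2 * y ^ 2 * X) ^ 2) with (4 * (y ^ 2) ^ 2 * X ^ 2) by ring.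
    apply Rmult_le_compat_l; [nra | exact HabX]. }
  replace (2 * (a + b) * y ^ 2 * (1 + y ^ 2)) with (2 * y ^ 2 * X) by (unfold X; ring).
  assert (0 <= 2 * y ^ 2 * X) by nra.
  apply Rsqr_incr_0_var; [unfold Rsqr; nra | assumption].
Qed.

Section ReducedEquation.

Variables (n : R) (z z1 : R -> R).
Hypothesis n_ge4 : 4 <= n.
Hypothesis z_derive : forall s, 0 < s -> is_derive z s (z1 s).
Hypothesis z1_derive : forall s, 0 < s ->
  is_derive z1 s ((n - 4) * z1 s + (2 * n - 4) * z s - (n - 1) / 2 * z s ^ 2).
Hypothesis z_at_right0 : filterlim z (at_right 0) (locally 0).
Hypothesis z_at_pinfty : is_lim z p_infty 0.

Definition energy (s : R) : R := z1 s ^ 2 / 2 - potential n (z s).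

Lemma energy_derive (s : R) : 0 < s -> is_derive energy s ((n - 4) * z1 s ^ 2).
Proof.
  intros Hs. unfold energy, potential. auto_derive.
  - repeat split; try (eexists; apply z_derive, Hs); eexists; apply z1_derive, Hs.
  - replace (Derive (fun x => z x) s) with (z1 s)
      by (symmetry; apply is_derive_unique, z_derive, Hs).
    replace (Derive (fun x => z1 x) s)
      with ((n - 4) * z1 s + (2 * n - 4) * z s - (n - 1) / 2 * z s ^ 2)
      by (symmetry; apply is_derive_unique, z1_derive, Hs).
    field.
Qed.

Lemma energy_nondecreasing (a b : R) : 0 < a -> a <= b -> energy a <= energy b.
Proof.
  intros Ha Hab. apply (deriv_ge0_nondecreasing _ (fun s => (n - 4) * z1 s ^ 2)); auto.
  - exact energy_derive.
  - intros s _. apply Rmult_le_pos; [lra | apply pow2_ge_0].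
Qed.

Lemma energy_ge0 (s : R) : 0 < s -> 0 <= energy s.
Proof.
  intros Hs.
  enough (- energy s <= 0) by lra.
  rewrite <- (potential0 n).
  apply (at_right_lim_ge (fun r => potential n (z r)) 0 s); [| exact Hs |].
  - exact (filterlim_comp_ex_derive z (potential n) 0 z_at_right0 (ex_derive_potential n 0)).
  - intros r Hr. pose proof (energy_nondecreasing r s ltac:(lra) ltac:(lra)).
    unfold energy in *. pose proof (pow2_ge_0 (z1 r)). lra.
Qed.

Lemma energy_le0 (s : R) : 0 < s -> energy s <= 0.
Proof.
  intros Hs. apply Rnot_lt_le. intros Hpos.
  assert (HF : is_lim (fun r => potential n (z r)) p_infty 0).
  { rewrite <- (potential0 n).
    exact (filterlim_comp_ex_derive z (potential n) 0 z_at_pinfty (ex_derive_potential n 0)). }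
  assert (Hhalf : 0 < energy s / 2) by lra.
  destruct (HF _ (locally_ball 0 (mkposreal _ Hhalf))) as [M HM].
  pose proof (Rmax_l M s). pose proof (Rmax_r M s).
  destruct (is_lim_pinfty_deriv_sqr_lt z z1 0 (energy s) (Rmax M s + 1)) as [c [Hc Hc2]];
    [exact Hpos | lra | exact z_derive | exact z_at_pinfty |].
  pose proof (energy_nondecreasing s c Hs ltac:(lra)) as Hsc.
  specialize (HM c ltac:(lra)). change (Rabs (potential n (z c) - 0) < energy s / 2) in HM.
  apply Rabs_def2 in HM. unfold energy at 2 in Hsc. lra.
Qed.

Lemma z1_sqr_potential (s : R) : 0 < s -> z1 s ^ 2 = 2 * potential n (z s).
Proof.
  intros Hs. pose proof (energy_ge0 s Hs). pose proof (energy_le0 s Hs).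
  unfold energy in *. lra.
Qed.

(* Gronwall for [u = z^2 / (1 + z^2)], for which the conservation law gives [u' <= lam u]. *)
Lemma reduced_solution_vanish (s : R) : 0 < s -> z s = 0.
Proof.
  intros Hs.
  set (lam := 2 * ((2 * n - 4) + (n - 1) / 3)).
  set (u := fun y => y ^ 2 / (1 + y ^ 2)).
  assert (Hu_pos : forall y, 0 < 1 + y ^ 2) by (intros y; pose proof (pow2_ge_0 y); lra).
  assert (Hu_derive : forall r, 0 < r ->
    is_derive (fun r => u (z r)) r (2 * z r * z1 r / (1 + z r ^ 2) ^ 2)).
  { intros r Hr. unfold u. specialize (Hu_pos (z r)). auto_derive.
    - repeat split; try (eexists; apply z_derive, Hr); lra.
    - replace (Derive (fun x => z x) r) with (z1 r)
        by (symmetry; apply is_derive_unique, z_derive, Hr).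
      field. lra. }
  assert (Hu_growth : forall r, 0 < r -> 2 * z r * z1 r / (1 + z r ^ 2) ^ 2 <= lam * u (z r)).
  { intros r Hr. unfold u. specialize (Hu_pos (z r)).
    pose proof (zero_energy_mul_le n (z r) (z1 r) n_ge4 (z1_sqr_potential r Hr)) as Hslope.
    apply (Rmult_le_reg_r ((1 + z r ^ 2) ^ 2)); [nra |].
    replace (2 * z r * z1 r / (1 + z r ^ 2) ^ 2 * (1 + z r ^ 2) ^ 2) with (2 * z r * z1 r)
      by (field; lra).
    replace (lam * (z r ^ 2 / (1 + z r ^ 2)) * (1 + z r ^ 2) ^ 2)
      with (lam * z r ^ 2 * (1 + z r ^ 2)) by (field; lra).
    exact Hslope. }
  assert (Hu0 : filterlim (fun r => u (z r)) (at_right 0) (locally 0)).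
  { replace 0 with (u 0) at 2 by (unfold u; field).
    apply (filterlim_comp_ex_derive z u 0 z_at_right0).
    unfold u. auto_derive. lra. }
  pose proof (gronwall_at_right0 _ _ lam Hu_derive Hu_growth Hu0 s Hs) as Hus.
  unfold u in Hus. specialize (Hu_pos (z s)).
  assert (z s ^ 2 <= 0).
  { apply (Rmult_le_reg_r (/ (1 + z s ^ 2))); [apply Rinv_0_lt_compat; lra | lra]. }
  nra.
Qed.

End ReducedEquation.

Lemma radial_to_reduced (n : R) (w w1 w2 : R -> R) (s : R) :
  is_derive w s (w1 s) -> is_derive w1 s (w2 s) ->
  - w2 s + (n - 2) * w1 s + (n - 1) * w s = (n - 1) / 2 * exp (- s) * w s ^ 2 ->
  is_derive (fun x => exp (- x) * (w1 x - w x)) s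
    ((n - 4) * (exp (- s) * (w1 s - w s)) + (2 * n - 4) * (exp (- s) * w s)
     - (n - 1) / 2 * (exp (- s) * w s) ^ 2).
Proof.
  intros Hw Hw1 Hode.
  replace ((n - 4) * (exp (- s) * (w1 s - w s)) + (2 * n - 4) * (exp (- s) * w s)
           - (n - 1) / 2 * (exp (- s) * w s) ^ 2)
    with (exp (- s) * ((w2 s - w1 s) - (w1 s - w s)))
    by (replace (w2 s) with ((n - 2) * w1 s + (n - 1) * w s - (n - 1) / 2 * exp (- s) * w s ^ 2)
          by lra; ring).
  apply (is_derive_exp_opp_mult (fun x => w1 x - w x)).
  apply (is_derive_minus w1 w s (w2 s) (w1 s) Hw1 Hw).
Qed.

Theorem theorem3p3 (N : nat) (w w1 w2 : R -> R) :
  (4 <= N)%nat ->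
  C2_nonneg w w1 w2 ->
  (forall t : R, 0 <= t ->
     - w2 t + (INR N - 2) * w1 t + (INR N - 1) * w t
     = (INR N - 1) / 2 * exp (- t) * (w t) ^ 2) ->
  w 0 = 0 ->
  is_lim w p_infty 0 ->
  forall t : R, 0 <= t -> w t = 0.
Proof.
  intros HN [Hw [Hw1 _]] Hode Hw0 Hlim t [Ht | <-]; [| exact Hw0].
  assert (Hn : 4 <= INR N) by (replace 4 with (INR 4) by (simpl; ring); apply le_INR; exact HN).
  assert (Dw : forall s, 0 < s -> is_derive w s (w1 s))
    by (intros; apply (deriv_on_nonneg_is_derive w w1); auto).
  assert (Dw1 : forall s, 0 < s -> is_derive w1 s (w2 s))
    by (intros; apply (deriv_on_nonneg_is_derive w1 w2); auto).
  assert (Hz0 : filterlim (fun s => exp (- s) * w s) (at_right 0) (locally 0)).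
  { replace 0 with (exp (- 0) * w 0) at 2 by (rewrite Hw0; ring).
    apply filterlim_Rmult; [| exact (deriv_on_nonneg_at_right0 w w1 Hw)].
    apply (ex_derive_at_right (fun s => exp (- s))). auto_derive. trivial. }
  assert (Hzinf : is_lim (fun s => exp (- s) * w s) p_infty 0).
  { replace (Finite 0) with (Rbar_mult 0 0) by (simpl; f_equal; ring).
    apply is_lim_mult; [exact is_lim_exp_opp_pinfty | exact Hlim | exact I]. }
  pose proof (reduced_solution_vanish (INR N) (fun s => exp (- s) * w s)
    (fun s => exp (- s) * (w1 s - w s)) Hn
    (fun s Hs => is_derive_exp_opp_mult w s (w1 s) (Dw s Hs))
    (fun s Hs => radial_to_reduced (INR N) w w1 w2 s (Dw s Hs) (Dw1 s Hs)
                   (Hode s (Rlt_le _ _ Hs)))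
    Hz0 Hzinf t Ht) as Hzt.
  pose proof (exp_pos (- t)). simpl in Hzt. nra.
Qed.
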